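(* Let $A$ be a type, $M=\{m_1,\dots,m_n\}$ a set of constructors for $A$, and $p:A\to B$, $h:A\to C$ programs. (i) If $(\textit{null}, c_1,\dots,c_n)$ is a solution of $\mathsf{PLP}(M,p,h)$, then $(\textit{null}, c_1\triangle \textit{null},\dots,c_n\triangle\textit{null})$ is a solution of $\mathsf{LP}(M,p,h)$. (ii) If $(f,c_1,\dots,c_n)$ is a solution of $\mathsf{PLP}(M,p,h)$ and $(f',c_1',\dots,c_n')$ is a solution of $\mathsf{LP}(M,f,h\triangle f)$, then $(f\triangle f', c_1^*,\dots,c_n^* )$ is a solution of $\mathsf{LP}(M,p,h)$, where $$c_i^*=\big(c_i\circ \mathsf F_{m_i}\varphi_l\big)\triangle\big(c_i'\circ\mathsf F_{m_i}\varphi_r\big),\qquad \varphi_l(a,(b,c))=(a,b),\quad \varphi_r(a,(b,c))=((a,b),c).$$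
   Context: Function notation: $(f\circ g)\,x=f(g\,x)$, $(f\triangle g)\,x=(f\,x,g\,x)$, $(f\times g)(x_1,x_2)=(f\,x_1,g\,x_2)$. $\textit{null}$ denotes the constant function returning the unit value $()$ (representing ''no supplementary information''). Functors: only functors built from the identity functor $\mathsf I$ ($\mathsf I A=A$, $\mathsf I f=f$), constant functors $!A$ ($(!A)B=A$, $(!A)f=\mathrm{id}_A$), and products $\mathsf F_1\times\mathsf F_2$ ($(\mathsf F_1\times\mathsf F_2)A=\mathsf F_1A\times\mathsf F_2A$, $(\mathsf F_1\times\mathsf F_2)f=\mathsf F_1f\times\mathsf F_2f$) are considered. A constructor $m$ for a type $A$ is a function $m:\mathsf F_mA\to A$ with an attached functor $\mathsf F_m$ (e.g. list concatenation $\lambda(l_1,l_2).\,l_1+\!\!+\,l_2$ with $\mathsf F_m=\mathsf I\times\mathsf I$). Lifting problem $\mathsf{LP}(M,p,h)$ for $M=\{m_1,\dots,m_n\}$, $p:A\to B$, $h:A\to C$: find a lifting scheme $f$ (a function on $A$) and combinators $c_1,\dots,c_n$ such that for all $i$, $(p\triangle f)\circ m_i=c_i\circ\mathsf F_{m_i}(h\triangle f)$ (equality of functions). Partial lifting problem $\mathsf{PLP}(M,p,h)$: find $f,c_1,\dots,c_n$ with $p\circ m_i=c_i\circ\mathsf F_{m_i}(h\triangle f)$ for all $i$. *)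

From Stdlib Require Fin.

Definition comp {X Y Z : Type} (f : Y -> Z) (g : X -> Y) : X -> Z := fun x => f (g x).
Definition split {X Y Z : Type} (f : X -> Y) (g : X -> Z) : X -> Y * Z := fun x => (f x, g x).
Definition pmap {X1 X2 Y1 Y2 : Type} (f : X1 -> Y1) (g : X2 -> Y2) : X1 * X2 -> Y1 * Y2 :=
  fun x => (f (fst x), g (snd x)).
Definition null {X : Type} : X -> unit := fun _ => tt.

Inductive functor : Type :=
| FI : functor
| FK : Type -> functor
| FP : functor -> functor -> functor.

Fixpoint fobj (F : functor) (X : Type) : Type :=
  match F with
  | FI => X
  | FK K => K
  | FP F1 F2 => (fobj F1 X * fobj F2 X)%type
  end.

Fixpoint fmap (F : functor) {X Y : Type} (f : X -> Y) : fobj F X -> fobj F Y :=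
  match F return fobj F X -> fobj F Y with
  | FI => f
  | FK K => fun k => k
  | FP F1 F2 => pmap (fmap F1 f) (fmap F2 f)
  end.

Record ctor (A : Type) := Ctor { cF : functor; cfun : fobj cF A -> A }.
Arguments cF {A}.
Arguments cfun {A}.

(* Lifting problem LP(M,p,h), M = {m_1..m_n} given as m : Fin.t n -> ctor A *)
Definition LP_sol {A B C D : Type} {n : nat} (m : Fin.t n -> ctor A)
  (p : A -> B) (h : A -> C) (f : A -> D)
  (c : forall i : Fin.t n, fobj (cF (m i)) (C * D) -> B * D) : Prop :=
  forall i, comp (split p f) (cfun (m i)) = comp (c i) (fmap (cF (m i)) (split h f)).

Definition PLP_sol {A B C D : Type} {n : nat} (m : Fin.t n -> ctor A)
  (p : A -> B) (h : A -> C) (f : A -> D)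
  (c : forall i : Fin.t n, fobj (cF (m i)) (C * D) -> B) : Prop :=
  forall i, comp p (cfun (m i)) = comp (c i) (fmap (cF (m i)) (split h f)).

Definition phi_l {X Y Z : Type} : X * (Y * Z) -> X * Y := fun x => (fst x, fst (snd x)).
Definition phi_r {X Y Z : Type} : X * (Y * Z) -> (X * Y) * Z :=
  fun x => ((fst x, fst (snd x)), snd (snd x)).

(* Part (ii) is a tupling argument: the first component of the composite
   combinator recovers p from the partial solution, the second recovers
   (f, f') from the lifting solution, and phi_l, phi_r only select the
   supplementary information each of them expects, by functoriality of F_m. *)

From Stdlib Require Fin.
From Stdlib Require Import FunctionalExtensionality.

Lemma fmap_comp (F : functor) {X Y Z : Type} (g : Y -> Z) (k : X -> Y) :
  comp (fmap F g) (fmap F k) = fmap F (comp g k).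
Proof.
  apply functional_extensionality; unfold comp.
  induction F as [| K | F1 IH1 F2 IH2]; intro x; simpl; try reflexivity.
  unfold pmap; simpl; rewrite IH1, IH2; reflexivity.
Qed.

Lemma comp_assoc {W X Y Z : Type} (f : Y -> Z) (g : X -> Y) (k : W -> X) :
  comp (comp f g) k = comp f (comp g k).
Proof. reflexivity. Qed.

Lemma comp_split {X Y Z W : Type} (a : Y -> Z) (b : Y -> W) (g : X -> Y) :
  comp (split a b) g = split (comp a g) (comp b g).
Proof. reflexivity. Qed.

Lemma phi_l_split {X Y Z W : Type} (h : X -> Y) (f : X -> Z) (f' : X -> W) :
  comp phi_l (split h (split f f')) = split h f.
Proof. reflexivity. Qed.

Lemma phi_r_split {X Y Z W : Type} (h : X -> Y) (f : X -> Z) (f' : X -> W) :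
  comp phi_r (split h (split f f')) = split (split h f) f'.
Proof. reflexivity. Qed.

Lemma LP_sol_null_of_PLP_sol {A B C : Type} {n : nat} (m : Fin.t n -> ctor A)
    (p : A -> B) (h : A -> C)
    (c : forall i : Fin.t n, fobj (cF (m i)) (C * unit) -> B) :
  PLP_sol m p h null c -> LP_sol m p h null (fun i => split (c i) null).
Proof.
  intros Hc i; rewrite !comp_split, Hc; reflexivity.
Qed.

Lemma LP_sol_split_of_PLP_sol {A B C D E : Type} {n : nat} (m : Fin.t n -> ctor A)
    (p : A -> B) (h : A -> C)
    (f : A -> D) (c : forall i : Fin.t n, fobj (cF (m i)) (C * D) -> B)
    (f' : A -> E) (c' : forall i : Fin.t n, fobj (cF (m i)) ((C * D) * E) -> D * E) :
  PLP_sol m p h f c ->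
  LP_sol m f (split h f) f' c' ->
  LP_sol m p h (split f f')
    (fun i => split (comp (c i) (fmap (cF (m i)) (@phi_l C D E)))
                    (comp (c' i) (fmap (cF (m i)) (@phi_r C D E)))).
Proof.
  intros Hc Hc' i.
  rewrite !comp_split, !comp_assoc, !fmap_comp, phi_l_split, phi_r_split.
  rewrite <- Hc, <- Hc'; reflexivity.
Qed.

Theorem theorem1 :
  (forall (A B C : Type) (n : nat) (m : Fin.t n -> ctor A) (p : A -> B) (h : A -> C)
     (c : forall i : Fin.t n, fobj (cF (m i)) (C * unit) -> B),
     PLP_sol m p h null c ->
     LP_sol m p h null (fun i => split (c i) null))
  /\
  (forall (A B C D E : Type) (n : nat) (m : Fin.t n -> ctor A) (p : A -> B) (h : A -> C)
     (f : A -> D) (c : forall i : Fin.t n, fobj (cF (m i)) (C * D) -> B)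
     (f' : A -> E) (c' : forall i : Fin.t n, fobj (cF (m i)) ((C * D) * E) -> D * E),
     PLP_sol m p h f c ->
     LP_sol m f (split h f) f' c' ->
     LP_sol m p h (split f f')
       (fun i => split (comp (c i) (fmap (cF (m i)) (@phi_l C D E)))
                       (comp (c' i) (fmap (cF (m i)) (@phi_r C D E))))).
Proof.
  split.
  - intros A B C n m p h c; apply LP_sol_null_of_PLP_sol.
  - intros A B C D E n m p h f c f' c'; apply LP_sol_split_of_PLP_sol.
Qed.
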